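(* Let $G$ be a full, flexible group of homeomorphisms of the Cantor set $\{0,1\}^\omega$. Suppose that: (1) for all $g\in G$ both $(1,g)$ and $(g,1)$ lie in $G$, and every element of $G$ supported on $I_0$ or on $I_1$ has this form; (2) for all $g\in G$ there exists $h\in G$ with $h=(g,h)$; and (3) the homeomorphism $x_0$ lies in $G$. Then $G$ is simple.
   Context: $I_\alpha$ is the set of sequences beginning with the finite word $\alpha$. $G$ is full if every homeomorphism $h$ of $\{0,1\}^\omega$ that locally agrees with $G$ (each point has a neighborhood $U$ and some $g\in G$ with $h|_U=g|_U$) belongs to $G$. $G$ is flexible if for every pair $E_1,E_2$ of proper nonempty clopen subsets there is $g\in G$ with $g(E_1)\subseteq E_2$. For homeomorphisms $f,g$, $(f,g)$ is the homeomorphism with $(f,g)(0\zeta)=0f(\zeta)$, $(f,g)(1\zeta)=1g(\zeta)$; $1$ denotes the identity. An element is supported on $E$ if it is the identity off $E$. $x_0$ is the homeomorphism (first generator of Thompson's group $F$) with $x_0(00\zeta)=0\zeta$, $x_0(01\zeta)=10\zeta$, $x_0(1\zeta)=11\zeta$ for all $\zeta\in\{0,1\}^\omega$. *)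

(* The Cantor space {0,1}^omega is nat -> bool, with the
   product topology written out via cylinder (finite-prefix) neighbourhoods.
   Bit 0 is [false], bit 1 is [true]. *)

Definition cantor := nat -> bool.

Definition agree (n : nat) (x y : cantor) : Prop := forall k, k < n -> x k = y k.

Definition is_open (U : cantor -> Prop) : Prop :=
  forall x, U x -> exists n, forall y, agree n x y -> U y.

Definition is_clopen (U : cantor -> Prop) : Prop :=
  is_open U /\ is_open (fun x => ~ U x).

Definition cont (f : cantor -> cantor) : Prop :=
  forall x n, exists m, forall y, agree m x y -> agree n (f x) (f y).

Definition homeo (f : cantor -> cantor) : Prop :=
  cont f /\ exists g, cont g /\ (forall x, g (f x) = x) /\ (forall x, f (g x) = x).

Definition cid : cantor -> cantor := fun x => x.

Definition comp (f g : cantor -> cantor) : cantor -> cantor := fun x => f (g x).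

Definition inverse_pair (f g : cantor -> cantor) : Prop :=
  (forall x, f (g x) = x) /\ (forall x, g (f x) = x).

Definition homeo_group (G : (cantor -> cantor) -> Prop) : Prop :=
  (forall g, G g -> homeo g) /\ G cid /\
  (forall f g, G f -> G g -> G (comp f g)) /\
  (forall g, G g -> exists h, G h /\ inverse_pair g h).

Definition subgroup (N G : (cantor -> cantor) -> Prop) : Prop :=
  (forall n, N n -> G n) /\ N cid /\
  (forall f g, N f -> N g -> N (comp f g)) /\
  (forall g, N g -> exists h, N h /\ inverse_pair g h).

Definition normal_subgroup (N G : (cantor -> cantor) -> Prop) : Prop :=
  subgroup N G /\
  (forall n g h, N n -> G g -> G h -> inverse_pair g h -> N (comp g (comp n h))).

Definition simple_group (G : (cantor -> cantor) -> Prop) : Prop :=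
  (exists g, G g /\ g <> cid) /\
  forall N, normal_subgroup N G ->
    (forall n, N n -> n = cid) \/ (forall g, G g -> N g).

Definition full (G : (cantor -> cantor) -> Prop) : Prop :=
  forall h, homeo h ->
    (forall x, exists U, is_open U /\ U x /\
        exists g, G g /\ forall y, U y -> h y = g y) ->
    G h.

Definition flexible (G : (cantor -> cantor) -> Prop) : Prop :=
  forall E1 E2 : cantor -> Prop,
    is_clopen E1 -> (exists x, E1 x) -> (exists x, ~ E1 x) ->
    is_clopen E2 -> (exists x, E2 x) -> (exists x, ~ E2 x) ->
    exists g, G g /\ forall x, E1 x -> E2 (g x).

Definition ccons (b : bool) (z : cantor) : cantor :=
  fun n => match n with 0 => b | S k => z k end.

Definition ctail (z : cantor) : cantor := fun n => z (S n).

(* (f,g)(0 z) = 0 f(z), (f,g)(1 z) = 1 g(z) *)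
Definition pairh (f g : cantor -> cantor) : cantor -> cantor :=
  fun z => if z 0 then ccons true (g (ctail z)) else ccons false (f (ctail z)).

Definition I0 : cantor -> Prop := fun z => z 0 = false.
Definition I1 : cantor -> Prop := fun z => z 0 = true.

Definition supported_on (g : cantor -> cantor) (E : cantor -> Prop) : Prop :=
  forall x, ~ E x -> g x = x.

Definition x0 : cantor -> cantor :=
  fun z =>
    if z 0 then ccons true (ccons true (ctail z))
    else if z 1 then ccons true (ccons false (ctail (ctail z)))
    else ccons false (ctail (ctail z)).

(* A nontrivial normal subgroup N contains an element n moving some cylinder U
   off itself.  For a, b supported on U the commutator [a, [b, n]] equals [a, b],
   so N contains every commutator of elements supported on U and, by flexibility,
   every commutator of elements supported on I_1.  If h = ((k,1),h), then
   [(1,(1,h)), (1,x0)] acts as k on I_1100 and trivially elsewhere; by hypothesis (1)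
   every element supported on I_1100 has this form, so N contains it, and by
   flexibility again N contains every element supported on a proper clopen set.
   Finally, by fullness every g factors as s (s g), where the involution s
   exchanges a small cylinder A with g(A) and s g fixes A pointwise. *)

From Stdlib Require Import FunctionalExtensionality Classical ClassicalEpsilon Arith Lia List.
Import ListNotations.

Lemma ccons_ctail z : ccons (z 0) (ctail z) = z.
Proof. extensionality n; destruct n; reflexivity. Qed.

Lemma x0_neq_cid : x0 <> cid.
Proof.
  intro E. pose proof (f_equal (fun f => f (ccons false (ccons true (fun _ => false))) 0) E) as H.
  discriminate H.
Qed.

Lemma agree_mono n m x y : n <= m -> agree m x y -> agree n x y.
Proof. intros Hnm H k Hk. apply H. lia. Qed.

Lemma agree_refl n x : agree n x x.
Proof. intros k _. reflexivity. Qed.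

Lemma agree_trans n x y z : agree n x y -> agree n y z -> agree n x z.
Proof. intros H1 H2 k Hk. rewrite (H1 k Hk). apply H2, Hk. Qed.

Definition flip_at (x : cantor) (M : nat) : cantor :=
  fun n => if Nat.eqb n M then negb (x n) else x n.

Lemma agree_flip_at x M : agree M x (flip_at x M).
Proof.
  intros k Hk. unfold flip_at. destruct (Nat.eqb_spec k M); [lia | reflexivity].
Qed.

Lemma not_agree_flip_at x M : ~ agree (S M) x (flip_at x M).
Proof.
  intro H. specialize (H M (Nat.lt_succ_diag_r M)). unfold flip_at in H.
  rewrite Nat.eqb_refl in H. destruct (x M); discriminate.
Qed.

Lemma open_ext (P Q : cantor -> Prop) : (forall x, P x <-> Q x) -> is_open P -> is_open Q.
Proof.
  intros H HP x Qx. destruct (HP x (proj2 (H x) Qx)) as [n Hn].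
  exists n. intros y Hy. apply H, Hn, Hy.
Qed.

Lemma open_and (P Q : cantor -> Prop) :
  is_open P -> is_open Q -> is_open (fun x => P x /\ Q x).
Proof.
  intros HP HQ x [Px Qx]. destruct (HP x Px) as [n Hn], (HQ x Qx) as [m Hm].
  exists (max n m). intros y Hy.
  split; [apply Hn | apply Hm]; apply (agree_mono _ (max n m)); auto; lia.
Qed.

Lemma open_or (P Q : cantor -> Prop) :
  is_open P -> is_open Q -> is_open (fun x => P x \/ Q x).
Proof.
  intros HP HQ x [Px | Qx].
  - destruct (HP x Px) as [n Hn]. exists n. intros y Hy. left. apply Hn, Hy.
  - destruct (HQ x Qx) as [n Hn]. exists n. intros y Hy. right. apply Hn, Hy.
Qed.

Lemma open_preimage (f : cantor -> cantor) (U : cantor -> Prop) :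
  cont f -> is_open U -> is_open (fun x => U (f x)).
Proof.
  intros Hf HU x Ux. destruct (HU _ Ux) as [n Hn]. destruct (Hf x n) as [m Hm].
  exists m. intros y Hy. apply Hn, Hm, Hy.
Qed.

Lemma clopen_not (P : cantor -> Prop) : is_clopen P -> is_clopen (fun x => ~ P x).
Proof.
  intros [HP HnP]. split; [exact HnP |].
  apply (open_ext P); [intro x; split; [tauto | apply NNPP] | exact HP].
Qed.

Lemma clopen_and (P Q : cantor -> Prop) :
  is_clopen P -> is_clopen Q -> is_clopen (fun x => P x /\ Q x).
Proof.
  intros [HP HnP] [HQ HnQ]. split; [apply open_and; assumption |].
  apply (open_ext (fun x => ~ P x \/ ~ Q x)); [intro x; tauto | apply open_or; assumption].
Qed.

Lemma clopen_or (P Q : cantor -> Prop) :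
  is_clopen P -> is_clopen Q -> is_clopen (fun x => P x \/ Q x).
Proof.
  intros [HP HnP] [HQ HnQ]. split; [apply open_or; assumption |].
  apply (open_ext (fun x => ~ P x /\ ~ Q x)); [intro x; tauto | apply open_and; assumption].
Qed.

Lemma clopen_preimage (f : cantor -> cantor) (P : cantor -> Prop) :
  cont f -> is_clopen P -> is_clopen (fun x => P (f x)).
Proof.
  intros Hf [HP HnP].
  split; [exact (open_preimage f P Hf HP) | exact (open_preimage f _ Hf HnP)].
Qed.

Definition proper_clopen (E : cantor -> Prop) : Prop :=
  is_clopen E /\ (exists x, E x) /\ (exists x, ~ E x).

Lemma agree_clopen M x : is_clopen (agree M x).
Proof.
  split; intros y Hy; exists M; intros w Hw.
  - exact (agree_trans _ _ _ _ Hy Hw).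
  - intro Hxw. apply Hy. intros k Hk. rewrite (Hxw k Hk). symmetry. apply Hw, Hk.
Qed.

Lemma agree_proper_clopen M x : proper_clopen (agree (S M) x).
Proof.
  split; [apply agree_clopen |].
  split; [exists x; apply agree_refl | exists (flip_at x M); apply not_agree_flip_at].
Qed.

Lemma cont_ctail : cont ctail.
Proof. intros x n. exists (S n). intros y Hy k Hk. apply Hy. lia. Qed.

Lemma cont_local (h : cantor -> cantor) :
  (forall x, exists U, is_open U /\ U x /\ exists g, cont g /\ forall y, U y -> h y = g y) ->
  cont h.
Proof.
  intros H x n. destruct (H x) as (U & HU & Ux & g & Hg & Hgy).
  destruct (HU x Ux) as [m1 Hm1]. destruct (Hg x n) as [m2 Hm2].
  exists (max m1 m2). intros y Hy. rewrite (Hgy x Ux), (Hgy y).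
  - apply Hm2. apply (agree_mono _ (max m1 m2)); [lia | exact Hy].
  - apply Hm1. apply (agree_mono _ (max m1 m2)); [lia | exact Hy].
Qed.

Fixpoint cyl (w : list bool) (z : cantor) : Prop :=
  match w with
  | [] => True
  | b :: w' => z 0 = b /\ cyl w' (ctail z)
  end.

Lemma cyl_clopen w : is_clopen (cyl w).
Proof.
  induction w as [| b w IH]; simpl.
  - split; intros x Hx; [exists 0; auto | contradiction].
  - apply clopen_and; [| exact (clopen_preimage ctail (cyl w) cont_ctail IH)].
    split; intros x Hx; exists 1; intros y Hy; rewrite <- (Hy 0); auto.
Qed.

Lemma cyl_proper_clopen b w : proper_clopen (cyl (b :: w)).
Proof.
  split; [apply cyl_clopen |]. split.
  - assert (Hw : exists z, cyl w z).
    { induction w as [| c w [z Hz]]; [exists (fun _ => false); exact I |].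
      exists (ccons c z). split; auto. }
    destruct Hw as [z Hz]. exists (ccons b z). split; auto.
  - exists (ccons (negb b) (fun _ => false)). intros [H _]. destruct b; discriminate.
Qed.

Definition branch (b : bool) (g : cantor -> cantor) : cantor -> cantor :=
  if b then pairh cid g else pairh g cid.

Definition on_word (w : list bool) (k : cantor -> cantor) : cantor -> cantor :=
  fold_right branch k w.

Lemma branch_ccons b g u : branch b g (ccons b u) = ccons b (g u).
Proof. destruct b; reflexivity. Qed.

Lemma branch_supported b g : supported_on (branch b g) (cyl [b]).
Proof.
  intros z Hz. rewrite <- (ccons_ctail z).
  destruct (z 0) eqn:Ez, b; try reflexivity; exfalso; apply Hz; split; solve [assumption | exact I].
Qed.

Section Restriction.

Variable G : (cantor -> cantor) -> Prop.
Hypothesis restrict0 : forall f, G f -> supported_on f I0 -> exists g, G g /\ f = pairh g cid.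
Hypothesis restrict1 : forall f, G f -> supported_on f I1 -> exists g, G g /\ f = pairh cid g.

Lemma branch_of_supported b f :
  G f -> supported_on f (cyl [b]) -> exists g, G g /\ f = branch b g.
Proof.
  intros Gf Sf.
  destruct b; [apply restrict1 | apply restrict0]; auto;
    intros z Hz; apply Sf; intros [H _]; exact (Hz H).
Qed.

Lemma on_word_of_supported w f :
  G f -> supported_on f (cyl w) -> exists k, G k /\ f = on_word w k.
Proof.
  revert f. induction w as [| b w IH]; intros f Gf Sf.
  { exists f. split; [exact Gf | reflexivity]. }
  destruct (branch_of_supported b f Gf) as [g [Gg ->]].
  { intros z Hz. apply Sf. intros [H _]. apply Hz. split; [exact H | exact I]. }
  destruct (IH g Gg) as [k [Gk ->]]; [| exists k; split; [exact Gk | reflexivity]].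
  intros y Hy.
  assert (Hf : branch b g (ccons b y) = ccons b y) by (apply Sf; intros [_ H]; exact (Hy H)).
  rewrite branch_ccons in Hf. exact (f_equal ctail Hf).
Qed.

End Restriction.

Lemma inverse_pair_sym f g : inverse_pair f g -> inverse_pair g f.
Proof. intros [H1 H2]. split; assumption. Qed.

Lemma inverse_pair_conj t t' c c' :
  inverse_pair t t' -> inverse_pair c c' ->
  inverse_pair (comp t (comp c t')) (comp t (comp c' t')).
Proof.
  intros [t1 t2] [c1 c2]. unfold comp.
  split; intro x; rewrite t2; [rewrite c1 | rewrite c2]; apply t1.
Qed.

Lemma supported_maps_into f f' E :
  inverse_pair f f' -> supported_on f E -> forall z, E z -> E (f z).
Proof.
  intros [_ f2] Sf z Ez. apply NNPP. intro H.
  assert (Hz : f z = z) by (rewrite <- (f2 (f z)), (Sf _ H); apply f2).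
  apply H. rewrite Hz. exact Ez.
Qed.

Lemma supported_on_inverse f f' E :
  inverse_pair f f' -> supported_on f E -> supported_on f' E.
Proof. intros [_ f2] Sf z Hz. rewrite <- (Sf z Hz) at 1. apply f2. Qed.

Lemma supported_on_conj t t' c (E1 E : cantor -> Prop) :
  inverse_pair t t' -> (forall y, E1 y -> E (t y)) ->
  supported_on c E1 -> supported_on (comp t (comp c t')) E.
Proof.
  intros [t1 t2] Ht Sc y Hy. unfold comp. rewrite Sc; [apply t1 |].
  intro H. apply Hy. rewrite <- (t1 y). apply Ht, H.
Qed.

Lemma disjoint_supports_commute f f' g g' (E F : cantor -> Prop) :
  inverse_pair f f' -> inverse_pair g g' -> (forall z, E z -> ~ F z) ->
  supported_on f E -> supported_on g F -> forall z, f (g z) = g (f z).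
Proof.
  intros If Ig D Sf Sg z. destruct (classic (E z)) as [Ez | Ez].
  - rewrite (Sg z (D z Ez)), (Sg (f z) (D _ (supported_maps_into f f' E If Sf z Ez))).
    reflexivity.
  - rewrite (Sf z Ez). apply Sf. intro Egz. destruct (classic (F z)) as [Fz | Fz].
    + exact (D _ Egz (supported_maps_into g g' F Ig Sg z Fz)).
    + rewrite (Sg z Fz) in Egz. exact (Ez Egz).
Qed.

Definition displaces (g : cantor -> cantor) (E : cantor -> Prop) : Prop :=
  forall y, E y -> ~ E (g y).

Lemma exists_displaced_cylinder g :
  cont g -> g <> cid -> exists x M, displaces g (agree (S M) x).
Proof.
  intros Hg Hne.
  assert (Hxj : exists x j, g x j <> x j).
  { apply NNPP. intro Hno. apply Hne. extensionality x. extensionality j.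
    apply NNPP. intro H. apply Hno. exists x, j. exact H. }
  destruct Hxj as [x [j Hj]]. destruct (Hg x (S j)) as [m Hm].
  exists x, (max m j). intros y Hy Hgy.
  assert (Hgxy := Hm y (agree_mono m (S (max m j)) x y ltac:(lia) Hy) j
                      (Nat.lt_succ_diag_r j)).
  apply Hj. rewrite Hgxy. symmetry. apply Hgy. lia.
Qed.

Lemma commutator_eq f f' g g' c :
  inverse_pair f f' -> inverse_pair g g' -> (forall z, f (g z) = c (g (f z))) ->
  comp f (comp g (comp f' g')) = c.
Proof.
  intros [f1 _] [g1 _] H. extensionality z. unfold comp. rewrite H, f1, g1. reflexivity.
Qed.

(* In commutator form: [(1,h), x0] = (1,(k,1)) whenever h = (k,h). *)
Lemma x0_conj_self_similar k h :
  h = pairh k h -> forall z, pairh cid h (x0 z) = pairh cid (pairh k cid) (x0 (pairh cid h z)).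
Proof.
  intros Hh z.
  assert (hF : forall u, h (ccons false u) = ccons false (k u))
    by (intro u; exact (f_equal (fun f => f (ccons false u)) Hh)).
  assert (hT : forall u, h (ccons true u) = ccons true (h u))
    by (intro u; exact (f_equal (fun f => f (ccons true u)) Hh)).
  rewrite <- (ccons_ctail z). destruct (z 0).
  - change (ccons true (h (ccons true (ctail z))) = ccons true (ccons true (h (ctail z)))).
    rewrite hT. reflexivity.
  - rewrite <- (ccons_ctail (ctail z)). destruct (ctail z 0).
    + change (ccons true (h (ccons false (ctail (ctail z))))
              = ccons true (ccons false (k (ctail (ctail z))))).
      rewrite hF. reflexivity.
    + reflexivity.
Qed.

Section Swap.

Variables (g gi : cantor -> cantor) (A : cantor -> Prop).
Hypothesis Hg : inverse_pair g gi.
Hypothesis Hdisp : displaces g A.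

Definition swap : cantor -> cantor := fun z =>
  if excluded_middle_informative (A z) then g z
  else if excluded_middle_informative (A (gi z)) then gi z else z.

Lemma swap_on_A z : A z -> swap z = g z.
Proof. intro Az. unfold swap. destruct (excluded_middle_informative (A z)); tauto. Qed.

Lemma swap_on_image z : ~ A z -> A (gi z) -> swap z = gi z.
Proof.
  intros Az Agz. unfold swap.
  destruct (excluded_middle_informative (A z)), (excluded_middle_informative (A (gi z))); tauto.
Qed.

Lemma swap_supported : supported_on swap (fun z => A z \/ A (gi z)).
Proof.
  intros z Hz. unfold swap.
  destruct (excluded_middle_informative (A z)), (excluded_middle_informative (A (gi z))); tauto.
Qed.

Lemma swap_involutive z : swap (swap z) = z.
Proof.
  destruct Hg as [g1 g2].
  destruct (classic (A z)) as [Az | Az]; [| destruct (classic (A (gi z))) as [Agz | Agz]].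
  - rewrite (swap_on_A z Az), swap_on_image, g2; [reflexivity | exact (Hdisp z Az) |].
    rewrite g2. exact Az.
  - rewrite (swap_on_image z Az Agz), swap_on_A, g1; [reflexivity | exact Agz].
  - rewrite (swap_supported z); [apply swap_supported |]; tauto.
Qed.

Lemma swap_comp_supported : supported_on (comp swap g) (fun z => ~ A z).
Proof.
  destruct Hg as [_ g2]. intros z Hz. apply NNPP in Hz. unfold comp.
  rewrite swap_on_image, g2; [reflexivity | exact (Hdisp z Hz) | rewrite g2; exact Hz].
Qed.

Lemma swap_in_full_group (G : (cantor -> cantor) -> Prop) :
  homeo_group G -> full G -> G g -> G gi -> is_clopen A -> G swap.
Proof.
  intros (Hhomeo & Gid & _) Hfull Gg Ggi [OA OnA].
  assert (Hcgi : cont gi) by apply (Hhomeo gi Ggi).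
  assert (Hloc : forall z, exists U, is_open U /\ U z /\
                   exists f, G f /\ forall y, U y -> swap y = f y).
  { intro z. destruct (classic (A z)) as [Az | Az].
    - exists A. repeat split; auto. exists g. split; [exact Gg | exact swap_on_A].
    - destruct (classic (A (gi z))) as [Agz | Agz].
      + exists (fun y => ~ A y /\ A (gi y)).
        split; [exact (open_and _ _ OnA (open_preimage gi A Hcgi OA)) | split; [auto |]].
        exists gi. split; [exact Ggi | intros y [H1 H2]; exact (swap_on_image y H1 H2)].
      + exists (fun y => ~ A y /\ ~ A (gi y)).
        split; [exact (open_and _ _ OnA (open_preimage gi _ Hcgi OnA)) | split; [auto |]].
        exists cid. split; [exact Gid | intros y [H1 H2]; apply swap_supported; tauto]. }
  apply Hfull; [| exact Hloc].
  assert (Hcont : cont swap).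
  { apply cont_local. intro z. destruct (Hloc z) as (U & HU & Uz & f & Gf & Hf).
    exists U. repeat split; auto. exists f. split; [apply (Hhomeo f Gf) | exact Hf]. }
  split; [exact Hcont |]. exists swap. repeat split; [exact Hcont | |]; exact swap_involutive.
Qed.

End Swap.

Section NormalSubgroup.

Variables G N : (cantor -> cantor) -> Prop.
Hypothesis HG : homeo_group G.
Hypothesis HN : normal_subgroup N G.

Lemma normal_of_conj t t' f :
  G t -> G t' -> inverse_pair t t' -> N (comp t (comp f t')) -> N f.
Proof.
  intros Gt Gt' It Hf. pose proof HN as [_ HNn].
  replace f with (comp t' (comp (comp t (comp f t')) t)).
  - exact (HNn _ t' t Hf Gt' Gt (inverse_pair_sym _ _ It)).
  - destruct It as [_ t2]. extensionality z. unfold comp. rewrite !t2. reflexivity.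
Qed.

Definition commutators_supported_in (E : cantor -> Prop) : Prop :=
  forall a a' b b', G a -> G a' -> inverse_pair a a' -> G b -> G b' -> inverse_pair b b' ->
    supported_on a E -> supported_on b E -> N (comp a (comp b (comp a' b'))).

Lemma commutators_supported_in_of_displaced n E :
  N n -> displaces n E -> commutators_supported_in E.
Proof.
  intros Nn Hdisp a a' b b' Ga Ga' Ia Gb Gb' Ib Sa Sb.
  pose proof HN as [[_ [_ [HNc HNi]]] HNn].
  destruct (HNi n Nn) as [n' [Nn' In]].
  pose proof In as [n1 n2]. pose proof Ib as [_ b2].
  set (c := comp b (comp n (comp b' n'))).
  set (ci := comp n (comp b (comp n' b'))).
  assert (Nc : N c) by exact (HNc _ _ (HNn n b b' Nn Gb Gb' Ib) Nn').
  assert (Nci : N ci) by exact (HNc _ _ Nn (HNn n' b b' Nn' Gb Gb' Ib)).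
  (* [a, [b, n]] = [a, b], since [b, n] agrees with b on E and n b^-1 n^-1 commutes with a^-1. *)
  assert (Hcomm : forall z, a' (n (b' (n' z))) = n (b' (n' (a' z)))).
  { apply (disjoint_supports_commute a' a (comp n (comp b' n')) (comp n (comp b n'))
             E (fun z => E (n' z))).
    - exact (inverse_pair_sym _ _ Ia).
    - exact (inverse_pair_conj _ _ _ _ In (inverse_pair_sym _ _ Ib)).
    - intros z Ez Ez'. apply (Hdisp _ Ez'). rewrite n1. exact Ez.
    - exact (supported_on_inverse a a' E Ia Sa).
    - apply (supported_on_conj n n' b' E); [exact In | intros y Ey; rewrite n2; exact Ey |].
      exact (supported_on_inverse b b' E Ib Sb). }
  replace (comp a (comp b (comp a' b'))) with (comp (comp a (comp c a')) ci).
  - exact (HNc _ _ (HNn c a a' Nc Ga Ga' Ia) Nci).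
  - extensionality z. unfold c, ci, comp. rewrite <- Hcomm, n2, b2, n1. reflexivity.
Qed.

Lemma commutators_supported_in_transport t (E1 E : cantor -> Prop) :
  G t -> (forall y, E1 y -> E (t y)) ->
  commutators_supported_in E -> commutators_supported_in E1.
Proof.
  intros Gt Ht HC a a' b b' Ga Ga' Ia Gb Gb' Ib Sa Sb.
  pose proof HG as (_ & _ & HGc & HGi).
  destruct (HGi t Gt) as [t' [Gt' It]].
  assert (Gconj : forall c, G c -> G (comp t (comp c t'))) by (intros c Gc; auto).
  apply (normal_of_conj t t'); [exact Gt | exact Gt' | exact It |].
  replace (comp t (comp (comp a (comp b (comp a' b'))) t'))
    with (comp (comp t (comp a t')) (comp (comp t (comp b t'))
            (comp (comp t (comp a' t')) (comp t (comp b' t'))))).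
  - apply HC; auto using inverse_pair_conj.
    + exact (supported_on_conj t t' a E1 E It Ht Sa).
    + exact (supported_on_conj t t' b E1 E It Ht Sb).
  - destruct It as [_ t2]. extensionality z. unfold comp. rewrite !t2. reflexivity.
Qed.

Hypothesis Hpair : forall g, G g -> G (pairh cid g) /\ G (pairh g cid).
Hypothesis Hfix : forall g, G g -> exists h, G h /\ h = pairh g h.
Hypothesis Hx0 : G x0.

Lemma on_word_1100_in_normal k :
  commutators_supported_in (cyl [true]) -> G k -> N (on_word [true; true; false; false] k).
Proof.
  intros HC Gk. pose proof HG as (_ & _ & _ & HGi).
  destruct (Hfix (pairh k cid) (proj2 (Hpair k Gk))) as [h [Gh Hh]].
  set (P := pairh cid (pairh cid h)). set (Q := pairh cid x0).
  assert (GP : G P) by exact (proj1 (Hpair _ (proj1 (Hpair _ Gh)))).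
  assert (GQ : G Q) by exact (proj1 (Hpair _ Hx0)).
  destruct (HGi P GP) as [P' [GP' IP]], (HGi Q GQ) as [Q' [GQ' IQ]].
  replace (on_word _ k) with (comp P (comp Q (comp P' Q'))).
  - apply HC; auto; apply (branch_supported true).
  - apply commutator_eq; [exact IP | exact IQ |].
    intro z. rewrite <- (ccons_ctail z). destruct (z 0); [| reflexivity].
    exact (f_equal (ccons true) (x0_conj_self_similar _ h Hh (ctail z))).
Qed.

Hypothesis Hflex : flexible G.
Hypothesis restrict0 : forall f, G f -> supported_on f I0 -> exists g, G g /\ f = pairh g cid.
Hypothesis restrict1 : forall f, G f -> supported_on f I1 -> exists g, G g /\ f = pairh cid g.

Lemma supported_in_normal b w :
  (forall k, G k -> N (on_word (b :: w) k)) ->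
  forall f E, G f -> proper_clopen E -> supported_on f E -> N f.
Proof.
  intros Hw f E Gf [CE [NE PE]] Sf.
  destruct (cyl_proper_clopen b w) as [C2 [N2 P2]].
  destruct (Hflex E (cyl (b :: w)) CE NE PE C2 N2 P2) as [t [Gt Ht]].
  pose proof HG as (_ & _ & HGc & HGi).
  destruct (HGi t Gt) as [t' [Gt' It]].
  apply (normal_of_conj t t'); [exact Gt | exact Gt' | exact It |].
  destruct (on_word_of_supported G restrict0 restrict1 (b :: w) (comp t (comp f t')))
    as [k [Gk ->]]; [auto | exact (supported_on_conj t t' f E _ It Ht Sf) | exact (Hw k Gk)].
Qed.

Hypothesis Hfull : full G.

Lemma all_in_normal :
  (forall f E, G f -> proper_clopen E -> supported_on f E -> N f) -> forall g, G g -> N g.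
Proof.
  intros Hsupp g Gg.
  pose proof HG as (Hhomeo & _ & HGc & HGi). pose proof HN as [[_ [Nid [HNc _]]] _].
  destruct (classic (g = cid)) as [-> | Hne]; [exact Nid |].
  destruct (HGi g Gg) as [gi [Ggi Ig]].
  destruct (exists_displaced_cylinder g (proj1 (Hhomeo g Gg)) Hne) as [x [M Hdisp]].
  (* Shrinking the displaced cylinder leaves room for a point outside A and g(A). *)
  set (A := agree (S (S M)) x).
  assert (Hshrink : forall z, A z -> agree (S M) x z) by (intro z; apply agree_mono; lia).
  assert (HdispA : displaces g A)
    by (intros z Az Agz; exact (Hdisp z (Hshrink z Az) (Hshrink _ Agz))).
  set (y := flip_at x (S M)).
  assert (Ay : ~ A y) by apply not_agree_flip_at.
  assert (Agy : ~ A (gi y)).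
  { intro H. apply (Hdisp (gi y) (Hshrink _ H)). rewrite (proj1 Ig). apply agree_flip_at. }
  pose proof (agree_clopen (S (S M)) x) as CA.
  set (s := swap g gi A).
  assert (Gs : G s) by exact (swap_in_full_group g gi A Ig HdispA G HG Hfull Gg Ggi CA).
  assert (Ns : N s).
  { apply (Hsupp _ (fun z => A z \/ A (gi z)) Gs); [| exact (swap_supported g gi A)].
    split; [exact (clopen_or _ _ CA (clopen_preimage gi A (proj1 (Hhomeo gi Ggi)) CA)) |].
    split; [exists x; left; apply agree_refl | exists y; tauto]. }
  assert (Nsg : N (comp s g)).
  { apply (Hsupp _ (fun z => ~ A z)); [auto | | exact (swap_comp_supported g gi A Ig HdispA)].
    split; [exact (clopen_not A CA) |].
    split; [exists y; exact Ay | exists x; intro H; apply H, agree_refl]. }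
  replace g with (comp s (comp s g)); [exact (HNc _ _ Ns Nsg) |].
  extensionality z. exact (swap_involutive g gi A Ig HdispA (g z)).
Qed.

End NormalSubgroup.

Theorem theorem2p10 (G : (cantor -> cantor) -> Prop) :
  homeo_group G -> full G -> flexible G ->
  (forall g, G g -> G (pairh cid g) /\ G (pairh g cid)) ->
  (forall f, G f -> supported_on f I0 -> exists g, G g /\ f = pairh g cid) ->
  (forall f, G f -> supported_on f I1 -> exists g, G g /\ f = pairh cid g) ->
  (forall g, G g -> exists h, G h /\ h = pairh g h) ->
  G x0 ->
  simple_group G.
Proof.
  intros HG Hfull Hflex Hpair restrict0 restrict1 Hfix Hx0.
  split; [exists x0; exact (conj Hx0 x0_neq_cid) |].
  intros N HN.
  destruct (classic (exists n, N n /\ n <> cid)) as [[n [Nn Hn]] | Htriv];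
    [right | left; intros n Nn; apply NNPP; intro Hn; apply Htriv; exists n; auto].
  pose proof HN as [[HNG _] _]. pose proof HG as (Hhomeo & _).
  destruct (exists_displaced_cylinder n (proj1 (Hhomeo n (HNG n Nn))) Hn) as [x [M Hdisp]].
  destruct (agree_proper_clopen M x) as [C [NE PE]].
  destruct (cyl_proper_clopen true []) as [C1 [NE1 PE1]].
  destruct (Hflex _ _ C1 NE1 PE1 C NE PE) as [t [Gt Ht]].
  assert (HC : commutators_supported_in G N (cyl [true])).
  { apply (commutators_supported_in_transport G N HG HN t _ _ Gt Ht).
    exact (commutators_supported_in_of_displaced G N HN n _ Nn Hdisp). }
  apply (all_in_normal G N HG HN Hfull).
  apply (supported_in_normal G N HG HN Hflex restrict0 restrict1 true [true; false; false]).
  intros k Gk. exact (on_word_1100_in_normal G N HG Hpair Hfix Hx0 k HC Gk).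
Qed.
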